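(* The map $\Delta\mapsto G_n(\Delta)$ from the set of zero-normalized $\Gamma_{m,n}$-semimodules to $Y_{n,m}$ is bijective if and only if the map $\Delta\mapsto G_m(\Delta)$ from the set of zero-normalized $\Gamma_{m,n}$-semimodules to $Y_{m,n}$ is bijective.
   Context: Let $m,n$ be coprime positive integers and $\Gamma_{m,n}=\{am+bn:a,b\in\mathbb{Z}_{\ge0}\}$. A $\Gamma_{m,n}$-semimodule is $\Delta\subset\mathbb{Z}_{\ge0}$ with $\Delta+\Gamma_{m,n}\subset\Delta$; zero-normalized means $\min\Delta=0$. For $p\in\{m,n\}$, a $p$-generator of $\Delta$ is $a\in\Delta$ with $a-p\notin\Delta$; there are exactly $p$ of them. With $a_1<\dots<a_m$ the $m$-generators and $b_1<\dots<b_n$ the $n$-generators, put $g_m(x)=\#(([x,x+n)\cap\mathbb{Z})\setminus\Delta)$, $g_n(x)=\#(([x,x+m)\cap\mathbb{Z})\setminus\Delta)$. $G_m(\Delta)$ is the Young diagram with column heights $g_m(a_1)\ge\dots\ge g_m(a_m)$, and $G_n(\Delta)$ the one with column heights $g_n(b_1)\ge\dots\ge g_n(b_n)$. For coprime $p,q$, $Y_{p,q}$ is the set of Young diagrams (French convention) with column heights $h_1\ge\dots\ge h_p\ge0$ such that every box in column $i$, row $j$ ($1\le j\le h_i$) satisfies $i/p+j/q\le1$; one has $G_m(\Delta)\in Y_{m,n}$ and $G_n(\Delta)\in Y_{n,m}$. *)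

From mathcomp Require Import all_boot.
Set Implicit Arguments. Unset Strict Implicit. Unset Printing Implicit Defensive.

(* A subset Delta of Z_{>=0} is represented by its (boolean) membership predicate. *)

(* Delta + Gamma_{m,n} \subset Delta  (equivalently: closed under +m and +n). *)
Definition semimodule (m n : nat) (D : nat -> bool) : Prop :=
  forall x, D x -> D (x + m) /\ D (x + n).

(* zero-normalized: min Delta = 0, i.e. 0 \in Delta (Delta \subset Z_{>=0}). *)
Definition zn_semimodule (m n : nat) (D : nat -> bool) : Prop :=
  semimodule m n D /\ D 0.

(* a is a p-generator of D : a \in D and a - p \notin D (a - p < 0 counts as \notin D). *)
Definition is_gen (p : nat) (D : nat -> bool) (a : nat) : bool :=
  D a && ~~ ((p <= a) && D (a - p)).

(* All of them are < m*n (since Delta \supset Gamma_{m,n} contains every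
   integer >= (m-1)(n-1)), so searching in [0, m*n) lists all of them. *)
Definition gens (m n p : nat) (D : nat -> bool) : seq nat :=
  [seq a <- iota 0 (m * n) | is_gen p D a].

Definition gap_count (D : nat -> bool) (len x : nat) : nat :=
  count (fun y => ~~ D y) (iota x len).

(* Young diagrams are given by their list of column heights. *)
Definition G_m (m n : nat) (D : nat -> bool) : seq nat :=
  [seq gap_count D n a | a <- gens m n m D].

Definition G_n (m n : nat) (D : nat -> bool) : seq nat :=
  [seq gap_count D m b | b <- gens m n n D].

(* Y_{p,q}: column heights h_1 >= ... >= h_p >= 0 such that every box
   (column i, row j, 1 <= j <= h_i) satisfies i/p + j/q <= 1, i.e. i*q + j*p <= p*q.
   Columns are 0-indexed here: column i+1 of the paper is index i. *)
Definition in_Y (p q : nat) (h : seq nat) : Prop :=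
  [/\ size h = p, sorted geq h &
      forall i : 'I_p, forall j : nat,
        1 <= j <= nth 0 h i -> i.+1 * q + j * p <= p * q].

Definition bij_onto (m n : nat) (G : (nat -> bool) -> seq nat)
    (Y : seq nat -> Prop) : Prop :=
  [/\ (forall D, zn_semimodule m n D -> Y (G D)),
      (forall D1 D2, zn_semimodule m n D1 -> zn_semimodule m n D2 ->
          G D1 = G D2 -> D1 =1 D2) &
      (forall h, Y h -> exists D, zn_semimodule m n D /\ G D = h)].

(* A zero-normalized semimodule Delta with conductor c has the dual
   Delta' = [c, oo) u {x | c - 1 - x \notin Delta}, again a zero-normalized
   semimodule with conductor c, and Delta |-> Delta' is an involution.
   The reflection x |-> c + p - 1 - x exchanges the p-generators of Delta and
   Delta'.  Counting the gaps of a window [b, b + m) by the n-generators lying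
   beyond it then shows that G_n(Delta) is the conjugate partition of
   G_m(Delta').  Conjugation is a bijection from Y_{m,n} onto Y_{n,m}, so
   bijectivity of either map transfers to the other. *)
From mathcomp Require Import all_boot zify.

Lemma zn_semimodule_sym {m n D} : zn_semimodule m n D -> zn_semimodule n m D.
Proof. by case=> closedD D0; split=> // x /closedD []. Qed.

Lemma semimodule_add_mul {m n D x} k : semimodule m n D -> D x -> D (x + k * m).
Proof.
move=> closedD Dx; elim: k => [|k IHk]; first by rewrite addn0.
by rewrite mulSn addnCA addnC; exact: (closedD _ IHk).1.
Qed.

Lemma mem_gens m n p D x : (x \in gens m n p D) = (x < m * n) && is_gen p D x.
Proof. by rewrite mem_filter mem_iota add0n andbC. Qed.

Lemma gens_uniq m n p D : uniq (gens m n p D).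
Proof. by rewrite filter_uniq // iota_uniq. Qed.

Lemma gens_sorted m n p D : sorted ltn (gens m n p D).
Proof. by apply: sorted_filter; [exact: ltn_trans | exact: iota_ltn_sorted]. Qed.

Lemma gens_swap m n p D : gens m n p D = gens n m p D.
Proof. by rewrite /gens mulnC. Qed.

Lemma gap_countS D n a :
  gap_count D n a + ~~ D (a + n) = ~~ D a + gap_count D n a.+1.
Proof.
rewrite /gap_count.
have -> : ~~ D a + count (fun y => ~~ D y) (iota a.+1 n)
          = count (fun y => ~~ D y) (iota a (n + 1)) by rewrite addn1.
by rewrite iotaD count_cat /= addn0.
Qed.

Lemma count_geqS (s : seq nat) k : uniq s ->
  count (fun b => k <= b) s = (k \in s) + count (fun b => k.+1 <= b) s.
Proof.
move=> uniq_s; rewrite -(count_uniq_mem k uniq_s) -count_predUI.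
have /eqP -> : count (predI (pred1 k) (fun b => k.+1 <= b)) s == 0.
  by rewrite -leqn0 leqNgt -has_count; apply/hasP => -[x _] /= /andP[/eqP ->]; rewrite ltnn.
by rewrite addn0; apply: eq_count => x /=; rewrite leq_eqVlt; lia.
Qed.

Lemma sorted_count_nth {T : Type} {r : rel T} {P : pred T} (x0 : T) {s i} :
  transitive r -> (forall x y, r x y -> P y -> P x) -> sorted r s -> i < size s ->
  (i < count P s) = P (nth x0 s i).
Proof.
move=> r_trans P_down; elim: s i => [|x s IHs] i //= sorted_xs lt_i.
have sorted_s := path_sorted sorted_xs.
have r_x_s : all (r x) s := order_path_min r_trans sorted_xs.
case Px : (P x); first by case: i lt_i => // i lt_i; rewrite ltnS IHs.
have notP_s : all (predC P) s.
  by apply: sub_all r_x_s => y /= /P_down Py; apply/negP => /Py; rewrite Px.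
have -> : count P s = 0 by apply/eqP; rewrite -leqn0 leqNgt -has_count -all_predC.
case: i lt_i => [|i] lt_i //=; apply/esym/negbTE/negP => Py.
by have := P_down _ _ (all_nthP x0 r_x_s i lt_i) Py; rewrite Px.
Qed.

Section Generators.

Context {m n : nat} {D : nat -> bool}.
Hypotheses (m_gt0 : 0 < m) (n_gt0 : 0 < n) (coprime_mn : coprime m n).
Hypothesis zD : zn_semimodule m n D.

(* Every x >= (m - 1) n is k n + t m with k < m. *)
Lemma zn_semimodule_mem x : (m - 1) * n <= x -> D x.
Proof.
move=> le_x.
have [[u v] /= uv] : exists uv : nat * nat, uv.1 * n - uv.2 * m = 1.
  by apply/coprimeP => //; rewrite coprime_sym.
set k := (x * u) %% m.
have x_mod : x == k * n %[mod m].
  have un : u * n = 1 + v * m by lia.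
  by rewrite /k modnMml -mulnA un mulnDr muln1 mulnA addnC modnMDl.
have kn_le : k * n <= x.
  by apply: leq_trans le_x; rewrite leq_mul2r; have := ltn_mod (x * u) m; lia.
rewrite eqn_mod_dvd // in x_mod; case/dvdnP: x_mod => t x_eq.
have -> : x = k * n + t * m by lia.
have [closedD D0] := zD.
apply: (semimodule_add_mul t closedD); rewrite -[k * n]add0n.
exact: (semimodule_add_mul k (zn_semimodule_sym zD).1 D0).
Qed.

Lemma is_gen_lt a : is_gen n D a -> a < m * n.
Proof.
case/andP=> _; apply: contraNT; rewrite -leqNgt => le_a.
rewrite (leq_trans (leq_pmull _ m_gt0) le_a) zn_semimodule_mem //; lia.
Qed.

(* Each residue class mod n has one n-generator b, and y in that class is a
   gap iff y < b: the gaps of [a, a + n) match the n-generators >= a + n. *)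
Lemma gap_count_gens a :
  gap_count D n a = count (fun b => a + n <= b) (gens m n n D).
Proof.
have [closedD _] := zD.
elim: {a}(m * n - a) {-2}a (erefl (m * n - a)) => [|k IHk] a def_k.
  have /eqP -> : gap_count D n a == 0.
    rewrite -leqn0 leqNgt -has_count; apply/hasP => -[y].
    by rewrite mem_iota => /andP[le_ay _]; rewrite zn_semimodule_mem //; nia.
  apply/esym/eqP; rewrite -leqn0 leqNgt -has_count; apply/hasP => -[y].
  by rewrite mem_gens => /andP[lt_y _] /=; lia.
have := gap_countS D n a.
rewrite (count_geqS _ _ (gens_uniq _ _ _ _)) -addSn -IHk; last by lia.
have -> : (a + n \in gens m n n D) = D (a + n) && ~~ D a.
  rewrite mem_gens; case gen_an : (is_gen n D (a + n)).
    rewrite (is_gen_lt _ gen_an) -gen_an /is_gen leq_addl addnK.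
    by case: (D (a + n)) (D a) => [] [].
  by rewrite andbF -gen_an /is_gen leq_addl addnK.
by case Da : (D a); rewrite ?(closedD _ Da).2 //=; case: (D (a + n)) => /=; lia.
Qed.

Lemma size_gens : size (gens m n n D) = n.
Proof.
rewrite -(count_predC (fun b => n <= b)).
have -> : count (fun b => n <= b) (gens m n n D) = gap_count D n 0 by rewrite gap_count_gens.
have -> : count (predC (fun b => n <= b)) (gens m n n D) = count D (iota 0 n).
  rewrite count_filter -(subnKC (leq_pmull n m_gt0)) iotaD count_cat.
  have /eqP -> : count (predI (predC (fun b => n <= b)) (is_gen n D))
                   (iota (0 + n) (m * n - n)) == 0.
    rewrite -leqn0 leqNgt -has_count; apply/hasP => -[y].
    by rewrite mem_iota add0n => /andP[le_ny _] /andP[] /=; rewrite le_ny.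
  rewrite addn0; apply: eq_in_count => y; rewrite mem_iota /= => lt_y.
  by rewrite /is_gen -ltnNge lt_y /= leqNgt lt_y /= andbT.
by rewrite /gap_count addnC count_predC size_iota.
Qed.

End Generators.

Definition is_conductor (c : nat) (D : nat -> bool) :=
  (forall y, c <= y -> D y) /\ (0 < c -> ~~ D c.-1).

(* The disjunct c <= x is needed: for x >= c the truncated difference
   c - 1 - x is 0, and D 0 holds. *)
Definition dual (c : nat) (D : nat -> bool) : nat -> bool :=
  fun x => (c <= x) || ~~ D (c - 1 - x).

Lemma exists_conductor {m n D} : 0 < m -> 0 < n -> coprime m n ->
  zn_semimodule m n D -> exists c, is_conductor c D.
Proof.
move=> m_gt0 n_gt0 co zD.
move: (zn_semimodule_mem m_gt0 n_gt0 co zD); elim: ((m - 1) * n) => [|N IHN] memD.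
  by exists 0.
case DN : (D N); last by exists N.+1; split=> // _; rewrite DN.
by apply: IHN => y; rewrite leq_eqVlt => /orP[/eqP <- //|]; exact: memD.
Qed.

Lemma is_conductor_unique {c c' D} : is_conductor c D -> is_conductor c' D -> c = c'.
Proof.
move=> [memD notDc] [memD' notDc'].
case: (ltngtP c c') => // lt_cc'.
  by have := notDc' (leq_ltn_trans (leq0n c) lt_cc'); rewrite memD //; lia.
by have := notDc (leq_ltn_trans (leq0n c') lt_cc'); rewrite memD' //; lia.
Qed.

Lemma is_conductor_dual c {D : nat -> bool} : D 0 -> is_conductor c (dual c D).
Proof.
move=> D0; split=> [y le_cy | c_gt0]; first by rewrite /dual le_cy.
by rewrite /dual subn1 subnn D0 orbF -ltnNge ltn_predL.
Qed.

Section Duality.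

Context {c : nat} {D : nat -> bool}.
Hypothesis conductor_c : is_conductor c D.

Lemma dual_addr {p} :
  (forall x, D x -> D (x + p)) -> forall x, dual c D x -> dual c D (x + p).
Proof.
move=> closedD x /orP[le_cx | notD]; apply/orP; first by left; lia.
case: (leqP c (x + p)) => lt_xpc; [by left | right].
by apply: contra notD => /closedD; have -> : c - 1 - (x + p) + p = c - 1 - x by lia.
Qed.

Lemma zn_semimodule_dual {m n} : zn_semimodule m n D -> zn_semimodule m n (dual c D).
Proof.
move=> [closedD D0]; split.
  by move=> x dx; split; apply: (dual_addr _ x dx) => y /closedD[].
rewrite /dual; case: (posnP c) => [-> // | c_gt0]; rewrite subn0.
by rewrite subn1 (negPf (conductor_c.2 c_gt0)) orbT.
Qed.

Lemma dualK : dual c (dual c D) =1 D.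
Proof.
move=> x; rewrite /dual; case: (leqP c x) => [le_cx | lt_xc].
  by rewrite (conductor_c.1 x le_cx).
have -> : c <= c - 1 - x = false by lia.
have -> : c - 1 - (c - 1 - x) = x by lia.
by rewrite negbK.
Qed.

Lemma is_gen_lt_conductor {p a} : is_gen p D a -> a < c + p.
Proof.
case/andP=> _; rewrite negb_and; case: (leqP p a) => //= le_pa; last by lia.
by apply: contraNT; rewrite -leqNgt => le_a; apply: conductor_c.1; lia.
Qed.

Lemma is_gen_dual p x :
  is_gen p (dual c D) x = (x < c + p) && is_gen p D (c + p - 1 - x).
Proof.
have [memD _] := conductor_c; rewrite /is_gen /dual.
case: (leqP (c + p) x) => le_x /=.
  have -> : c <= x by lia.
  have -> : p <= x by lia.
  by have -> : c <= x - p by lia.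
have -> : c - 1 - x = c + p - 1 - x - p by lia.
have [le_px | lt_xp] := leqP p x; rewrite /=.
  have -> : c <= x - p = false by lia.
  have -> : c - 1 - (x - p) = c + p - 1 - x by lia.
  case: (leqP c x) => le_cx /=.
    have -> : p <= c + p - 1 - x = false by lia.
    by rewrite negbK andbT.
  have -> : p <= c + p - 1 - x by lia.
  by rewrite negbK andbC.
rewrite (memD (c + p - 1 - x)) /=; last by lia.
case: (leqP c x) => le_cx /=.
  by have -> : p <= c + p - 1 - x = false by lia.
have -> : p <= c + p - 1 - x by lia.
by rewrite andbT.
Qed.

Lemma perm_gens_dual {m n} : 0 < m -> 0 < n -> coprime m n -> zn_semimodule m n D ->
  perm_eq (gens m n n (dual c D)) [seq c + n - 1 - a | a <- gens m n n D].
Proof.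
move=> m_gt0 n_gt0 co zD.
have zD' := zn_semimodule_dual zD.
apply: uniq_perm; first exact: gens_uniq.
  rewrite map_inj_in_uniq ?gens_uniq // => a a'; rewrite !mem_gens.
  move=> /andP[_ /is_gen_lt_conductor lt_a] /andP[_ /is_gen_lt_conductor lt_a']; lia.
move=> x; apply/idP/mapP.
  rewrite mem_gens is_gen_dual => /andP[_ /andP[lt_x gen_x]].
  by exists (c + n - 1 - x); [rewrite mem_gens gen_x (is_gen_lt m_gt0 n_gt0 co zD) | lia].
case=> a; rewrite mem_gens => /andP[_ gen_a] ->.
have lt_a := is_gen_lt_conductor gen_a.
have gen_a' : is_gen n (dual c D) (c + n - 1 - a).
  rewrite is_gen_dual; have -> : c + n - 1 - (c + n - 1 - a) = a by lia.
  by rewrite gen_a andbT; lia.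
by rewrite mem_gens gen_a' (is_gen_lt m_gt0 n_gt0 co zD' _ gen_a').
Qed.

End Duality.

Lemma dual_inj c1 c2 D1 D2 : is_conductor c1 D1 -> is_conductor c2 D2 ->
  D1 0 -> D2 0 -> dual c1 D1 =1 dual c2 D2 -> D1 =1 D2.
Proof.
move=> cond1 cond2 D1_0 D2_0 eq_dual.
have cond12 : is_conductor c1 (dual c2 D2).
  by have [memD notD] := is_conductor_dual c1 D1_0; split=> [y /memD|/notD]; rewrite eq_dual.
have eq_c := is_conductor_unique cond12 (is_conductor_dual c2 D2_0); subst c2.
move=> x; rewrite -(dualK cond1 x) -(dualK cond2 x).
by rewrite [dual _ (dual _ D1) x]/dual [dual _ (dual _ D2) x]/dual eq_dual.
Qed.

Lemma G_m_ext m n {D D'} : D =1 D' -> G_m m n D = G_m m n D'.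
Proof.
move=> eqD; rewrite /G_m; have -> : gens m n m D = gens m n m D'.
  by apply: eq_filter => x; rewrite /is_gen !eqD.
by apply: eq_map => a; apply: eq_count => y; rewrite eqD.
Qed.

Definition conjugate (k : nat) (h : seq nat) : seq nat :=
  [seq count (fun x => j < x) h | j <- iota 0 k].

Lemma sorted_geq_count_gtn (h : seq nat) i j : sorted geq h -> i < size h ->
  (i < count (fun x => j < x) h) = (j < nth 0 h i).
Proof.
move=> sorted_h lt_i.
by apply: (sorted_count_nth (P := fun x => j < x) 0 _ _ sorted_h lt_i) => [x y z | x y] /=; lia.
Qed.

Lemma count_ltn_iota t q : count (fun j => j < t) (iota 0 q) = minn t q.
Proof.
elim: q => [|q IHq]; first by rewrite minn0.
by rewrite -addn1 iotaD count_cat IHq /= add0n; case: (ltnP q t); lia.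
Qed.

Lemma G_n_dual {m n c D} : 0 < m -> 0 < n -> coprime m n ->
  zn_semimodule m n D -> is_conductor c D ->
  G_n m n D = conjugate n (G_m m n (dual c D)).
Proof.
move=> m_gt0 n_gt0 co zD cond.
have co' : coprime n m by rewrite coprime_sym.
have zD' := zn_semimodule_dual cond zD.
have size_n := size_gens m_gt0 n_gt0 co zD.
have perm_m : perm_eq (gens m n m (dual c D)) [seq c + m - 1 - a | a <- gens m n m D].
  rewrite !(gens_swap m n).
  exact (perm_gens_dual cond n_gt0 m_gt0 co' (zn_semimodule_sym zD)).
apply: (@eq_from_nth _ 0); first by rewrite !size_map size_iota size_n.
rewrite size_map size_n => j lt_j.
rewrite (nth_map 0) ?size_n // (nth_map 0) ?size_iota // nth_iota // add0n.
rewrite (gap_count_gens n_gt0 m_gt0 co' (zn_semimodule_sym zD)) !(gens_swap n m).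
rewrite count_map (permP perm_m) count_map; apply: eq_in_count => a.
rewrite mem_gens => /andP[_ /(is_gen_lt_conductor cond) lt_a] /=.
rewrite (gap_count_gens m_gt0 n_gt0 co zD') (permP (perm_gens_dual cond m_gt0 n_gt0 co zD)).
rewrite count_map (@eq_in_count _ _ (fun b => b + m <= a)) => [|b]; last first.
  by rewrite mem_gens => /andP[_ /(is_gen_lt_conductor cond) lt_b] /=; lia.
rewrite (sorted_count_nth 0 ltn_trans) ?size_n ?gens_sorted // => x y /= lt_xy.
by apply: leq_trans; rewrite leq_add2r ltnW.
Qed.

Lemma in_Y_nth_leq {p q h i} : in_Y p q h -> i < p -> nth 0 h i <= q.
Proof.
case=> _ _ box lt_ip; case: (posnP (nth 0 h i)) => [-> // | h_gt0].
have := box (Ordinal lt_ip) (nth 0 h i); rewrite h_gt0 leqnn => /(_ isT) /= le_box.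
by rewrite -(leq_pmul2r (leq_ltn_trans (leq0n i) lt_ip)); nia.
Qed.

Lemma conjugateK_in_Y {p q h} : in_Y p q h -> conjugate p (conjugate q h) = h.
Proof.
move=> hY; have [size_h sorted_h _] := hY.
apply: (@eq_from_nth _ 0); first by rewrite size_map size_iota.
rewrite size_map size_iota => i lt_ip.
rewrite (nth_map 0) ?size_iota // nth_iota // add0n count_map.
rewrite (eq_count (a2 := fun j => j < nth 0 h i)) => [|j]; last first.
  by rewrite /= sorted_geq_count_gtn // size_h.
by rewrite count_ltn_iota; apply/minn_idPl; exact: in_Y_nth_leq hY lt_ip.
Qed.

Lemma in_Y_conjugate {p q h} : in_Y p q h -> in_Y q p (conjugate q h).
Proof.
case=> size_h sorted_h box; split; first by rewrite size_map size_iota.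
  apply: homo_sorted (iota_ltn_sorted 0 q) => x y lt_xy.
  by apply: sub_count => z /= lt_yz; exact: ltn_trans lt_xy lt_yz.
move=> i j /andP[j_gt0]; rewrite (nth_map 0) ?size_iota // nth_iota // add0n => le_j.
have lt_j : j.-1 < count (fun x => i < x) h by lia.
have lt_jp : j.-1 < p by apply: leq_trans lt_j _; rewrite -size_h count_size.
rewrite sorted_geq_count_gtn ?size_h // in lt_j.
have := box (Ordinal lt_jp) i.+1; rewrite lt_j /= prednK //; lia.
Qed.

Lemma bij_onto_G_n_of_G_m {m n} : 0 < m -> 0 < n -> coprime m n ->
  bij_onto m n (G_m m n) (in_Y m n) -> bij_onto m n (G_n m n) (in_Y n m).
Proof.
move=> m_gt0 n_gt0 co [G_m_in_Y G_m_inj G_m_onto].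
have conductor D := @exists_conductor m n D m_gt0 n_gt0 co.
have G_n_dualE := G_n_dual m_gt0 n_gt0 co.
split.
- move=> D zD; have [c cond] := conductor D zD.
  rewrite (G_n_dualE _ _ zD cond).
  exact/in_Y_conjugate/G_m_in_Y/(zn_semimodule_dual cond zD).
- move=> D1 D2 zD1 zD2.
  have [c1 cond1] := conductor D1 zD1; have [c2 cond2] := conductor D2 zD2.
  have zD1' := zn_semimodule_dual cond1 zD1; have zD2' := zn_semimodule_dual cond2 zD2.
  rewrite (G_n_dualE _ _ zD1 cond1) (G_n_dualE _ _ zD2 cond2) => /(congr1 (conjugate m)).
  have Y1 := G_m_in_Y _ zD1'; have Y2 := G_m_in_Y _ zD2'.
  rewrite !conjugateK_in_Y // => eq_G_m.
  exact: dual_inj cond1 cond2 zD1.2 zD2.2 (G_m_inj _ _ zD1' zD2' eq_G_m).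
- move=> h hY; have [D [zD G_m_D]] := G_m_onto _ (in_Y_conjugate hY).
  have [c cond] := conductor D zD.
  exists (dual c D); split; first exact: zn_semimodule_dual.
  rewrite (G_n_dualE _ _ (zn_semimodule_dual cond zD) (is_conductor_dual c zD.2)).
  by rewrite (G_m_ext _ _ (dualK cond)) G_m_D conjugateK_in_Y.
Qed.

Lemma bij_onto_swap {m n G G'} {Y : seq nat -> Prop} :
  bij_onto m n G Y -> G =1 G' -> bij_onto n m G' Y.
Proof.
move=> [G_in_Y G_inj G_onto] eqG.
split=> [D /zn_semimodule_sym zD | D1 D2 zD1 zD2 | h /G_onto].
- by rewrite -eqG; apply: G_in_Y.
- by rewrite -!eqG; apply: G_inj; apply: zn_semimodule_sym.
- by case=> D [/zn_semimodule_sym zD <-]; exists D; rewrite eqG.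
Qed.

Lemma G_n_swap m n D : G_n m n D = G_m n m D.
Proof. by rewrite /G_m /G_n gens_swap. Qed.

Theorem mainTheorem7 (m n : nat) :
  0 < m -> 0 < n -> coprime m n ->
  (bij_onto m n (G_n m n) (in_Y n m) <-> bij_onto m n (G_m m n) (in_Y m n)).
Proof.
move=> m_gt0 n_gt0 co; split=> [bij_G_n | ]; last exact: bij_onto_G_n_of_G_m.
have co' : coprime n m by rewrite coprime_sym.
have bij_G_m' : bij_onto n m (G_m n m) (in_Y n m).
  exact: bij_onto_swap bij_G_n (G_n_swap m n).
exact: bij_onto_swap (bij_onto_G_n_of_G_m n_gt0 m_gt0 co' bij_G_m') (G_n_swap n m).
Qed.
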